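(* Neither $\sim_{hpb}\subseteq\sim_{\mathrm{t}\mu}$ nor $\sim_{\mathrm{t}\mu}\subseteq\sim_{hpb}$: there exist systems $\mathfrak T_1,\mathfrak T_2$ with $\mathfrak T_1\sim_{hpb}\mathfrak T_2$ but $\mathfrak T_1\not\sim_{\mathrm{t}\mu}\mathfrak T_2$, and there exist systems $\mathfrak T_3,\mathfrak T_4$ with $\mathfrak T_3\sim_{\mathrm{t}\mu}\mathfrak T_4$ but $\mathfrak T_3\not\sim_{hpb}\mathfrak T_4$.
   Context: A system (TSI) is $\mathfrak T=(S,s_0,T,I,\Sigma)$ with states $S$, initial $s_0$, labels $\Sigma$, transitions $T\subseteq S\times\Sigma\times S$, irreflexive symmetric independence $I\subseteq T\times T$ satisfying: with $(s,a,s_1)\prec(s_2,a,q)$ iff $\exists b$: $(s,a,s_1)I(s,b,s_2)$, $(s,a,s_1)I(s_1,b,q)$, $(s,b,s_2)I(s_2,a,q)$ and $\sim$ its equivalence closure, (A1) $(s,a,s_1)\sim(s,a,s_2)\Rightarrow s_1=s_2$; (A2) $(s,a,s_1)I(s,b,s_2)\Rightarrow\exists q.\,(s,a,s_1)I(s_1,b,q)\wedge(s,b,s_2)I(s_2,a,q)$; (A3) $(s,a,s_1)I(s_1,b,q)\Rightarrow\exists s_2.\,(s,a,s_1)I(s,b,s_2)\wedge(s,b,s_2)I(s_2,a,q)$; (A4) $t\sim t'\Rightarrow\{u:tIu\}=\{u:t'Iu\}$; systems are image-finite. For $t=(s,a,s')$: $\sigma(t)=s,\tau(t)=s',\delta(t)=a$.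 Relations: $t\otimes t'$ iff $\sigma(t)=\sigma(t')\wedge tIt'$; $t\ominus t'$ iff $\tau(t)=\sigma(t')\wedge tIt'$; $t\le t'$ iff $\tau(t)=\sigma(t')\wedge\neg tIt'$. Processes: $\mathfrak X(s)$ = transitions with source $s$; conflict-free set = set of transitions with common source, pairwise $\otimes$; support sets = the $\mathfrak X(s)$ and non-empty conflict-free sets; $M\sqsubseteq R$ iff $M\subseteq R$ and no $t\in R\setminus M$ has $t\otimes t'$ for all $t'\in M$; $\mathcal X$ = all $\mathfrak X(s)$ and all support sets $M\sqsubseteq\mathfrak X(s)$; $\mathfrak A=T\cup\{t_\epsilon\}$ with fresh $t_\epsilon$, $\tau(t_\epsilon)=s_0$, $t_\epsilon\le t$ whenever $\sigma(t)=s_0$, never $t_\epsilon\ominus t$; $\mathfrak S=\mathcal X\times\mathfrak A$, initial process $(\mathfrak X(s_0),t_\epsilon)$. Trace modal mu-calculus equivalence $\sim_{\mathrm{t}\mu}$: systems are equivalent iff their initial processes satisfy the same closed fixpoint-free formulas $\phi::=\mathrm{tt}\mid\neg\phi\mid\phi\wedge\phi\mid\langle a\rangle\phi\mid\langle\otimes\rangle\phi$ with $[\![\langle a\rangle\phi]\!]=\{(R,t):\exists r\in R.\ \delta(r)=a,\ (t\le r\text{ or }t\ominus r),\ (\mathfrak X(\tau(r)),r)\in[\![\phi]\!]\}$, $[\![\langle\otimes\rangle\phi]\!]=\{(R,t):\exists M\in\mathcal X.\ M\sqsubseteq R,\ (M,t)\in[\![\phi]\!]\}$, and boolean connectives interpreted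 as usual in $\mathfrak S$. $\sim_{hpb}$: runs are finite sequences $[t_1,\dots,t_k]$ with $\sigma(t_1)=s_0$, $\sigma(t_{i+1})=\tau(t_i)$; $\varrho(\pi)$ is the last transition (empty run $\epsilon$ ends at $s_0$; its ''last transition'' is independent of nothing). The labelled poset of a run: elements $1..k$ labelled $\delta(t_i)$, order the reflexive-transitive closure of $\{(i,j):i<j,\neg t_iIt_j\}$. $(\pi_1.u,\pi_2.v)$ is synchronous iff $(\varrho(\pi_1),u)\in I_1\Leftrightarrow(\varrho(\pi_2),v)\in I_2$ and the labelled posets of $\pi_1.u,\pi_2.v$ are isomorphic. hpb game from $(\epsilon,\epsilon)$: Adam picks a system and a transition $u$ from the end state of the current run there; Eve answers with an equally labelled transition $v$ from the end state of the current run in the other system so that the extended pair is synchronous; a player unable to move loses; infinite plays are won by Eve. $\mathfrak T_1\sim_{hpb}\mathfrak T_2$ iff Eve has a winning strategy. *)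

From Stdlib Require Import List Relations.
Import ListNotations.
Set Implicit Arguments.

Record TSI (L : Type) : Type := MkTSI {
  st : Type;
  s0 : st;
  tr : st -> L -> st -> Prop;
  ind : (st * L * st) -> (st * L * st) -> Prop
}.
Arguments s0 {L} _.
Arguments tr {L} _ _ _ _.
Arguments ind {L} _ _ _.

Section Sys.
Variables (L : Type) (T : TSI L).

Definition trn : Type := (st T * L * st T)%type.
Definition src (t : trn) : st T := fst (fst t).
Definition tgt (t : trn) : st T := snd t.
Definition lab (t : trn) : L := snd (fst t).
Definition is_trans (t : trn) : Prop := tr T (src t) (lab t) (tgt t).

Definition prec (t u : trn) : Prop :=
  exists (s s1 s2 q : st T) (a b : L),
    t = (s, a, s1) /\ u = (s2, a, q) /\
    ind T (s, a, s1) (s, b, s2) /\ ind T (s, a, s1) (s1, b, q) /\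
    ind T (s, b, s2) (s2, a, q).

Definition simt : trn -> trn -> Prop := clos_refl_sym_trans trn prec.

Definition is_TSI : Prop :=
  (forall t u, ind T t u -> is_trans t /\ is_trans u) /\
  (forall t, ~ ind T t t) /\
  (forall t u, ind T t u -> ind T u t) /\
  (forall s a s1 s2, simt (s, a, s1) (s, a, s2) -> s1 = s2) /\
  (forall s a b s1 s2, ind T (s, a, s1) (s, b, s2) ->
     exists q, ind T (s, a, s1) (s1, b, q) /\ ind T (s, b, s2) (s2, a, q)) /\
  (forall s a b s1 q, ind T (s, a, s1) (s1, b, q) ->
     exists s2, ind T (s, a, s1) (s, b, s2) /\ ind T (s, b, s2) (s2, a, q)) /\
  (forall t t', simt t t' -> forall u, ind T t u <-> ind T t' u) /\
  (forall s a, exists l : list (st T), forall s', tr T s a s' -> In s' l).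

Definition tset := trn -> Prop.

Definition otimes (t t' : trn) : Prop := src t = src t' /\ ind T t t'.
Definition ominus (t t' : trn) : Prop := tgt t = src t' /\ ind T t t'.
Definition leT (t t' : trn) : Prop := tgt t = src t' /\ ~ ind T t t'.

Definition Xs (s : st T) : tset := fun t => is_trans t /\ src t = s.

Definition set_eq (A B : tset) : Prop := forall t, A t <-> B t.

Definition conflict_free (M : tset) : Prop :=
  (exists s, forall t, M t -> is_trans t /\ src t = s) /\
  (forall t t', M t -> M t' -> t <> t' -> otimes t t').

Definition support (M : tset) : Prop :=
  (exists s, set_eq M (Xs s)) \/ ((exists t, M t) /\ conflict_free M).

Definition sqsub (M R : tset) : Prop :=
  (forall t, M t -> R t) /\
  ~ (exists t, R t /\ ~ M t /\ forall t', M t' -> otimes t t').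

Definition inX (M : tset) : Prop :=
  (exists s, set_eq M (Xs s)) \/ (support M /\ exists s, sqsub M (Xs s)).

(* \mathfrak A = T + {t_eps}; None encodes t_eps *)
Definition leA (t : option trn) (r : trn) : Prop :=
  match t with None => src r = s0 T | Some t => leT t r end.
Definition ominusA (t : option trn) (r : trn) : Prop :=
  match t with None => False | Some t => ominus t r end.

End Sys.

Inductive form (L : Type) : Type :=
| FTT : form L
| FNeg : form L -> form L
| FAnd : form L -> form L -> form L
| FDia : L -> form L -> form L
| FOt : form L -> form L.
Arguments FTT {L}.

Fixpoint sat {L : Type} {T : TSI L} (R : tset T) (t : option (trn T))
  (phi : form L) {struct phi} : Prop :=
  match phi with
  | FTT => True
  | FNeg p => ~ sat R t p
  | FAnd p q => sat R t p /\ sat R t q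
  | FDia a p => exists r, R r /\ lab r = a /\ (leA t r \/ ominusA t r) /\
                  sat (Xs (tgt r)) (Some r) p
  | FOt p => exists M : tset T, inX M /\ sqsub M R /\ sat M t p
  end.

Definition tmu_equiv (L : Type) (T1 T2 : TSI L) : Prop :=
  forall phi : form L,
    sat (@Xs L T1 (s0 T1)) None phi <-> sat (@Xs L T2 (s0 T2)) None phi.

Section Runs.
Variables (L : Type) (T : TSI L).

Definition rho (p : list (trn T)) : option (trn T) := last (map Some p) None.
Definition endst (p : list (trn T)) : st T :=
  match rho p with None => s0 T | Some t => tgt t end.
Definition indopt (o : option (trn T)) (u : trn T) : Prop :=
  match o with None => False | Some t => ind T t u end.

(* immediate causality between positions i < j of a run (0-based) *)
Definition rstep (p : list (trn T)) (i j : nat) : Prop :=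
  i < j /\ exists ti tj, nth_error p i = Some ti /\ nth_error p j = Some tj /\
                         ~ ind T ti tj.
Definition rord (p : list (trn T)) : nat -> nat -> Prop :=
  clos_refl_trans nat (rstep p).
End Runs.

Definition poset_iso (L : Type) (T1 T2 : TSI L)
  (p1 : list (trn T1)) (p2 : list (trn T2)) : Prop :=
  length p1 = length p2 /\
  exists f : nat -> nat,
    (forall i, i < length p1 -> f i < length p2) /\
    (forall i j, i < length p1 -> j < length p1 -> f i = f j -> i = j) /\
    (forall i, i < length p1 ->
       option_map (@lab L T1) (nth_error p1 i) =
       option_map (@lab L T2) (nth_error p2 (f i))) /\
    (forall i j, i < length p1 -> j < length p1 ->
       (rord p1 i j <-> rord p2 (f i) (f j))).

Definition synchronous (L : Type) (T1 T2 : TSI L)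
  (p1 : list (trn T1)) (u : trn T1) (p2 : list (trn T2)) (v : trn T2) : Prop :=
  (indopt (rho p1) u <-> indopt (rho p2) v) /\
  poset_iso (p1 ++ [u]) (p2 ++ [v]).

(* Eve has a winning strategy from position (p1, p2): every Adam move (in
   either system) has a legal synchronous answer from which Eve again wins;
   coinductive, since infinite plays are won by Eve. *)
CoInductive eve_wins {L : Type} {T1 T2 : TSI L} :
  list (trn T1) -> list (trn T2) -> Prop :=
| eve_step (p1 : list (trn T1)) (p2 : list (trn T2)) :
  (forall u, is_trans u -> src u = endst p1 ->
     exists v, is_trans v /\ src v = endst p2 /\ lab v = lab u /\
       synchronous p1 u p2 v /\ eve_wins (p1 ++ [u]) (p2 ++ [v])) ->
  (forall v, is_trans v -> src v = endst p2 ->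
     exists u, is_trans u /\ src u = endst p1 /\ lab u = lab v /\
       synchronous p1 u p2 v /\ eve_wins (p1 ++ [u]) (p2 ++ [v])) ->
  eve_wins p1 p2.

Definition hpb_equiv (L : Type) (T1 T2 : TSI L) : Prop := @eve_wins L T1 T2 [] [].

From Stdlib Require Import List Relations Classical FunctionalExtensionality PropExtensionality.
Import ListNotations.

(* For the first pair, Sys1 has three a||b diamonds at S0 and Sys2 only the first two; after
   the a of diamond 1, after the b of diamond 2 and after either move of diamond 3 a dependent
   c is enabled.  Folding diamond 3 onto the a-edge of diamond 1 and the b-edge of diamond 2
   preserves labels and the independence of consecutive moves, and runs have length at most
   two, so the folding is a winning strategy in the hpb game.  The logic, however, can use
   <⊗> to isolate diamond 3 as a conflict-free process both of whose moves enable c and all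
   of whose ⊑-subprocesses keep the b-move; in Sys2 a process with a c-enabling a-move and a
   c-enabling b-move contains two dependent transitions, hence is all of X(S0), which has the
   subprocess {a1, b1} without such a b-move.

   For the second pair, Sys4 is the diamond Sys3 plus a b-move PA -> PR that is dependent on
   the preceding a.  Adam plays a and then this b, and Eve can only answer with the
   independent b of the diamond.  The formulas cannot see the difference: processes of the
   two systems are matched by equality, except that {PA -b-> PQ} is matched with every
   nonempty set of b-moves out of PA, all of which lead to deadlocks, and this is a
   bisimulation for both modalities. *)

(** * Processes, trace bisimulations and mapped runs *)

Section Processes.
Context {L : Type} {T : TSI L}.

Lemma tset_ext {M M' : tset T} : (forall t, M t <-> M' t) -> M = M'.
Proof.
  intros H. apply functional_extensionality. intros t. apply propositional_extensionality, H.
Qed.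

Definition cur_state (t : option (trn T)) : st T :=
  match t with None => s0 T | Some t => tgt t end.

Lemma leA_or_ominusA (t : option (trn T)) (r : trn T) :
  src r = cur_state t -> leA t r \/ ominusA t r.
Proof.
  destruct t as [t|]; simpl; intros Hr; [|left; exact Hr].
  destruct (classic (ind T t r)); [right | left]; split; auto.
Qed.

Lemma sat_dia_intro (R : tset T) (t : option (trn T)) (r : trn T) (a : L) (p : form L) :
  R r -> lab r = a -> src r = cur_state t -> sat (Xs (tgt r)) (Some r) p -> sat R t (FDia a p).
Proof. intros Hr Hl Hs Hp. exists r. auto using leA_or_ominusA. Qed.

Lemma sqsub_refl (R : tset T) : sqsub R R.
Proof. split; [auto | intros (t & Ht & Hn & _); contradiction]. Qed.

Lemma sqsub_closed {M R : tset T} {t : trn T} :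
  sqsub M R -> R t -> (forall t', M t' -> t' <> t -> otimes t t') -> M t.
Proof.
  intros [_ Hmax] Ht Hot. apply NNPP. intros Hn. apply Hmax.
  exists t. split; [exact Ht | split; [exact Hn|]].
  intros t' Ht'. apply Hot; [exact Ht' | intros ->; contradiction].
Qed.

Lemma sqsub_inhabited {M R : tset T} : sqsub M R -> (exists t, R t) -> exists t, M t.
Proof.
  intros Hsq [t Ht]. apply NNPP. intros Hn. apply Hn. exists t.
  apply (sqsub_closed Hsq Ht). intros t' Ht'. elim Hn. eauto.
Qed.

Lemma sqsub_intro {M R : tset T} (t0 : trn T) :
  (forall t, M t -> R t) -> M t0 -> (forall t, R t -> otimes t t0 -> M t) -> sqsub M R.
Proof.
  intros HMR H0 Hot. split; [exact HMR|]. intros (t & Ht & Hn & Hall). eauto.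
Qed.

Lemma sqsub_empty {M R : tset T} : (forall t, ~ M t) -> (forall t, ~ R t) -> sqsub M R.
Proof.
  intros HM HR. split; [intros t Ht; elim (HM t Ht) | intros (t & Ht & _); exact (HR t Ht)].
Qed.

Lemma singleton_sqsub {R : tset T} {r : trn T} :
  R r -> (forall t, R t -> ~ otimes t r) -> sqsub (fun t => t = r) R.
Proof.
  intros Hr Hno. apply sqsub_intro with r; [intros t ->; exact Hr | reflexivity |].
  intros t Ht Hot. elim (Hno t Ht Hot).
Qed.

Lemma singleton_inX {s : st T} {r : trn T} :
  Xs s r -> (forall t, Xs s t -> ~ otimes t r) -> inX (fun t => t = r).
Proof.
  intros Hr Hno. right. split; [right; split; [eauto | split] | eauto using singleton_sqsub].
  - exists s. intros t ->. exact Hr.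
  - intros t t' -> -> Hne. elim Hne. reflexivity.
Qed.

Lemma pair_inX {s : st T} {t u : trn T} :
  Xs s t -> Xs s u -> otimes t u -> otimes u t ->
  sqsub (fun v => v = t \/ v = u) (Xs s) -> inX (fun v => v = t \/ v = u).
Proof.
  intros Ht Hu Htu Hut Hsq. right. split; [right; split; [eauto | split] | eauto].
  - exists s. intros v [-> | ->]; assumption.
  - intros v v' [-> | ->] [-> | ->] Hne; try (elim Hne; reflexivity); assumption.
Qed.

End Processes.

Section TraceBisimulation.
Context {L : Type} {T1 T2 : TSI L}.

Record trace_bisimulation
    (Z : tset T1 -> option (trn T1) -> tset T2 -> option (trn T2) -> Prop) : Prop := {
  bisim_dia_l : forall {R1 t1 R2 t2 r1}, Z R1 t1 R2 t2 -> R1 r1 -> leA t1 r1 \/ ominusA t1 r1 ->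
    exists r2, R2 r2 /\ lab r2 = lab r1 /\ (leA t2 r2 \/ ominusA t2 r2) /\
               Z (Xs (tgt r1)) (Some r1) (Xs (tgt r2)) (Some r2);
  bisim_dia_r : forall {R1 t1 R2 t2 r2}, Z R1 t1 R2 t2 -> R2 r2 -> leA t2 r2 \/ ominusA t2 r2 ->
    exists r1, R1 r1 /\ lab r1 = lab r2 /\ (leA t1 r1 \/ ominusA t1 r1) /\
               Z (Xs (tgt r1)) (Some r1) (Xs (tgt r2)) (Some r2);
  bisim_ot_l : forall {R1 t1 R2 t2 M1}, Z R1 t1 R2 t2 -> inX M1 -> sqsub M1 R1 ->
    exists M2, inX M2 /\ sqsub M2 R2 /\ Z M1 t1 M2 t2;
  bisim_ot_r : forall {R1 t1 R2 t2 M2}, Z R1 t1 R2 t2 -> inX M2 -> sqsub M2 R2 ->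
    exists M1, inX M1 /\ sqsub M1 R1 /\ Z M1 t1 M2 t2
}.

Lemma sat_trace_bisimulation {Z} : trace_bisimulation Z ->
  forall phi R1 t1 R2 t2, Z R1 t1 R2 t2 -> (sat R1 t1 phi <-> sat R2 t2 phi).
Proof.
  intros HZ phi. induction phi as [| p IH | p IHp q IHq | a p IH | p IH];
    intros R1 t1 R2 t2 HR; simpl.
  - tauto.
  - rewrite (IH _ _ _ _ HR). tauto.
  - rewrite (IHp _ _ _ _ HR), (IHq _ _ _ _ HR). tauto.
  - split.
    + intros (r1 & Hr1 & <- & Hc & Hs).
      destruct (bisim_dia_l _ HZ HR Hr1 Hc) as (r2 & Hr2 & Hl & Hc2 & HZ').
      exists r2. rewrite <- (IH _ _ _ _ HZ'). auto.
    + intros (r2 & Hr2 & <- & Hc & Hs).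
      destruct (bisim_dia_r _ HZ HR Hr2 Hc) as (r1 & Hr1 & Hl & Hc1 & HZ').
      exists r1. rewrite (IH _ _ _ _ HZ'). auto.
  - split.
    + intros (M1 & HX & Hsq & Hs).
      destruct (bisim_ot_l _ HZ HR HX Hsq) as (M2 & HX2 & Hsq2 & HZ').
      exists M2. rewrite <- (IH _ _ _ _ HZ'). auto.
    + intros (M2 & HX & Hsq & Hs).
      destruct (bisim_ot_r _ HZ HR HX Hsq) as (M1 & HX1 & Hsq1 & HZ').
      exists M1. rewrite (IH _ _ _ _ HZ'). auto.
Qed.

End TraceBisimulation.

Lemma clos_refl_trans_mono (A : Type) (R R' : relation A) :
  (forall x y, R x y -> R' x y) ->
  forall x y, clos_refl_trans A R x y -> clos_refl_trans A R' x y.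
Proof.
  intros H x y Hc. induction Hc; [apply rt_step; auto | apply rt_refl | eapply rt_trans; eauto].
Qed.

Lemma rho_In {L : Type} {T : TSI L} {p : list (trn T)} {x : trn T} : rho p = Some x -> In x p.
Proof.
  unfold rho. induction p as [|y p IH]; simpl; intros E; [discriminate|].
  destruct p as [|z p]; [left; injection E; auto | right; exact (IH E)].
Qed.

Section MappedRuns.
Context {L : Type} {T1 T2 : TSI L} (f : trn T1 -> trn T2).
Hypothesis f_lab : forall x, lab (f x) = lab x.

Lemma rho_map (p : list (trn T1)) : rho (map f p) = option_map f (rho p).
Proof.
  unfold rho. induction p as [|x p IH]; [reflexivity|].
  destruct p as [|y p]; [reflexivity | exact IH].
Qed.

Lemma rstep_map {p : list (trn T1)} {i j} :
  (forall x y, In x p -> In y p -> (ind T1 x y <-> ind T2 (f x) (f y))) ->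
  (rstep p i j <-> rstep (map f p) i j).
Proof.
  intros Hind. unfold rstep. rewrite !nth_error_map. split.
  - intros (Hij & ti & tj & Ei & Ej & Hn). split; [exact Hij|].
    exists (f ti), (f tj). rewrite Ei, Ej. split; [reflexivity | split; [reflexivity|]].
    rewrite <- Hind by (eapply nth_error_In; eauto). exact Hn.
  - intros (Hij & ti & tj & Ei & Ej & Hn). split; [exact Hij|].
    destruct (nth_error p i) as [ti'|] eqn:Fi; [|discriminate].
    destruct (nth_error p j) as [tj'|] eqn:Fj; [|discriminate].
    injection Ei as <-. injection Ej as <-. exists ti', tj'.
    split; [reflexivity | split; [reflexivity|]].
    rewrite Hind by (eapply nth_error_In; eauto). exact Hn.
Qed.

Lemma poset_iso_map (p : list (trn T1)) :
  (forall x y, In x p -> In y p -> (ind T1 x y <-> ind T2 (f x) (f y))) ->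
  poset_iso p (map f p).
Proof.
  intros Hind. split; [symmetry; apply length_map|].
  exists (fun i => i). rewrite length_map. split; [auto | split; [auto | split]].
  - intros i _. rewrite nth_error_map.
    destruct (nth_error p i); simpl; [rewrite f_lab|]; reflexivity.
  - intros i j _ _. split; apply clos_refl_trans_mono; intros x y; apply (rstep_map Hind).
Qed.

End MappedRuns.

Section FunctionalHpb.
Context {L : Type} {T1 T2 : TSI L} (f : trn T1 -> trn T2) (g : st T1 -> st T2).
Variable good : list (trn T1) -> Prop.
Hypothesis f_lab : forall x, lab (f x) = lab x.
Hypothesis f_src : forall x, src (f x) = g (src x).
Hypothesis f_tgt : forall x, tgt (f x) = g (tgt x).
Hypothesis g_s0 : g (s0 T1) = s0 T2.
Hypothesis f_trans : forall u, is_trans u -> is_trans (f u).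
Hypothesis f_onto : forall {s v}, is_trans v -> src v = g s ->
  exists u, is_trans u /\ src u = s /\ f u = v.
Hypothesis good_nil : good [].
Hypothesis good_snoc : forall {p u}, good p -> is_trans u -> src u = endst p -> good (p ++ [u]).
Hypothesis good_ind : forall {p}, good p ->
  forall x y, In x p -> In y p -> (ind T1 x y <-> ind T2 (f x) (f y)).

Lemma endst_map (p : list (trn T1)) : endst (map f p) = g (endst p).
Proof. unfold endst. rewrite rho_map. destruct (rho p); simpl; auto. Qed.

Lemma synchronous_map (p : list (trn T1)) (u : trn T1) :
  good p -> is_trans u -> src u = endst p -> synchronous p u (map f p) (f u).
Proof.
  intros Hp Hu Eu. pose proof (good_ind (good_snoc Hp Hu Eu)) as Hind. split.
  - rewrite rho_map. destruct (rho p) as [x|] eqn:Ex; simpl; [|tauto].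
    apply Hind; apply in_or_app; [left; exact (rho_In Ex) | right; left; reflexivity].
  - change (map f p ++ [f u]) with (map f p ++ map f [u]). rewrite <- map_app.
    apply poset_iso_map; assumption.
Qed.

Lemma eve_wins_map : forall p, good p -> eve_wins p (map f p).
Proof.
  cofix CH. intros p Hp. constructor.
  - intros u Hu Eu. exists (f u).
    split; [auto | split; [rewrite f_src, Eu; symmetry; apply endst_map | split; [auto|]]].
    split; [apply synchronous_map; auto|].
    change [f u] with (map f [u]). rewrite <- map_app. apply CH. auto.
  - intros v Hv Ev. rewrite endst_map in Ev.
    destruct (f_onto Hv Ev) as (u & Hu & Eu & <-).
    exists u. split; [auto | split; [auto | split; [auto|]]].
    split; [apply synchronous_map; auto|].
    change [f u] with (map f [u]). rewrite <- map_app. apply CH. auto.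
Qed.

Lemma hpb_equiv_of_map : hpb_equiv T1 T2.
Proof. exact (eve_wins_map _ good_nil). Qed.

End FunctionalHpb.

(** * Systems given by event classes *)

(* A transition's class names the event it performs; independence is a relation on classes. *)
Section ClassSystems.
Context {St Lb C : Type} (cls : St -> Lb -> St -> option C)
  (indc : C -> C -> bool).

Definition trans_class (t : St * Lb * St) : option C :=
  let '(s, a, s') := t in cls s a s'.

Definition ind_by_class (t u : St * Lb * St) : Prop :=
  match trans_class t, trans_class u with Some x, Some y => indc x y = true | _, _ => False end.

Definition class_system (init : St) : TSI Lb :=
  {| st := St; s0 := init; tr := fun s a s' => cls s a s' <> None; ind := ind_by_class |}.

Hypothesis indc_irrefl : forall x, indc x x = false.
Hypothesis indc_sym : forall x y, indc x y = indc y x.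
Hypothesis indc_unique : forall x y z, indc x y = true -> indc x z = true -> y = z.

Lemma ind_by_class_sym t u : ind_by_class t u <-> ind_by_class u t.
Proof.
  unfold ind_by_class. destruct (trans_class t), (trans_class u); try tauto.
  rewrite indc_sym. tauto.
Qed.

Lemma ind_by_class_irrefl t : ~ ind_by_class t t.
Proof.
  unfold ind_by_class. destruct (trans_class t); [rewrite indc_irrefl; discriminate | auto].
Qed.

(* Uniqueness of the matching class makes ≺ class-preserving: in a ≺-step both endpoints
   carry the unique class matched with that of the side transition. *)
Lemma simt_class init t u : simt (T := class_system init) t u ->
  t = u \/ (trans_class t = trans_class u /\ trans_class t <> None).
Proof.
  intros H. induction H as [x y Hp | x | x y _ IH | x y z _ IH1 _ IH2].
  - destruct Hp as (s & s1 & s2 & q & a & b & -> & -> & H1 & H2 & H3). right.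
    simpl in *. unfold ind_by_class in *. simpl in *.
    destruct (cls s a s1) as [x|]; [|contradiction].
    destruct (cls s b s2) as [y|]; [|contradiction].
    destruct (cls s2 a q) as [z|]; [|contradiction].
    rewrite indc_sym in H1. rewrite (indc_unique _ _ _ H1 H3). split; congruence.
  - left; reflexivity.
  - destruct IH as [->|[E N]]; [left; reflexivity | right; split; congruence].
  - destruct IH1 as [->|[E1 N1]]; destruct IH2 as [->|[E2 N2]]; auto.
    right; split; congruence.
Qed.

Lemma class_system_is_TSI (init : St)
  (cls_det : forall s a s1 s2 c, cls s a s1 = Some c -> cls s a s2 = Some c -> s1 = s2)
  (cls_A2 : forall s a b s1 s2, ind_by_class (s, a, s1) (s, b, s2) ->
     exists q, ind_by_class (s, a, s1) (s1, b, q) /\ ind_by_class (s, b, s2) (s2, a, q))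
  (cls_A3 : forall s a b s1 q, ind_by_class (s, a, s1) (s1, b, q) ->
     exists s2, ind_by_class (s, a, s1) (s, b, s2) /\ ind_by_class (s, b, s2) (s2, a, q))
  (states : list St) (states_all : forall s, In s states) :
  is_TSI (class_system init).
Proof.
  assert (Hcls : forall t u, ind_by_class t u -> trans_class t <> None /\ trans_class u <> None).
  { unfold ind_by_class. intros t u. destruct (trans_class t), (trans_class u); easy. }
  unfold is_TSI. repeat split.
  - destruct t as [[s a] s']. exact (proj1 (Hcls _ _ H)).
  - destruct u as [[s a] s']. exact (proj2 (Hcls _ _ H)).
  - exact ind_by_class_irrefl.
  - intros t u. apply ind_by_class_sym.
  - intros s a s1 s2 H. destruct (simt_class _ _ _ H) as [E|[E N]]; [injection E; auto|].
    simpl in E, N. destruct (cls s a s1) as [c|] eqn:E1; [|contradiction].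
    apply (cls_det s a s1 s2 c); congruence.
  - exact cls_A2.
  - exact cls_A3.
  - destruct (simt_class _ _ _ H) as [->|[E _]]; [tauto|].
    simpl. unfold ind_by_class. rewrite E. tauto.
  - destruct (simt_class _ _ _ H) as [->|[E _]]; [tauto|].
    simpl. unfold ind_by_class. rewrite E. tauto.
  - intros s a. exists states. intros; apply states_all.
Qed.

End ClassSystems.

(* side_a i and side_b i are the a- and b-edges of diamond i, parallel edges sharing a class;
   solo transitions are independent of nothing. *)
Inductive edge_class := side_a (i : nat) | side_b (i : nat) | solo.

Definition diamond_ind (x y : edge_class) : bool :=
  match x, y with
  | side_a i, side_b j | side_b i, side_a j => Nat.eqb i j
  | _, _ => false
  end.

Lemma diamond_ind_irrefl x : diamond_ind x x = false.
Proof. destruct x; reflexivity. Qed.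

Lemma diamond_ind_sym x y : diamond_ind x y = diamond_ind y x.
Proof. destruct x, y; simpl; auto using PeanoNat.Nat.eqb_sym. Qed.

Lemma diamond_ind_unique x y z : diamond_ind x y = true -> diamond_ind x z = true -> y = z.
Proof.
  destruct x, y, z; simpl; try discriminate;
    intros E1 E2; apply PeanoNat.Nat.eqb_eq in E1, E2; congruence.
Qed.

Ltac exists_state_in l :=
  lazymatch eval hnf in l with
  | ?x :: ?l' => first [exists x; split; exact eq_refl | exists_state_in l']
  end.

Ltac solve_class_system states states_all :=
  apply (class_system_is_TSI _ _ diamond_ind_irrefl diamond_ind_sym diamond_ind_unique) with states;
  [ intros s a s1 s2 c H1 H2; destruct s, a, s1; cbn in H1; try discriminate;
    destruct s2; cbn in H2; congruence
  | intros s a b s1 s2 H; destruct s, a, s1; cbn in H; try easy;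
    destruct b, s2; cbn in H; try easy; exists_state_in states
  | intros s a b s1 q H; destruct s, a, s1; cbn in H; try easy;
    destruct b, q; cbn in H; try easy; exists_state_in states
  | exact states_all ].

Ltac destruct_trans t :=
  let s := fresh "s" in let a := fresh "a" in let s' := fresh "s'" in
  destruct t as [[s a] s']; destruct s, a, s'.

Inductive label := la | lb | lc.

(** * Hp-bisimilar systems that the logic distinguishes *)

Inductive state1 := S0 | A1 | A2 | A3 | B1 | B2 | B3 | Q.

Definition states1 := [S0; A1; A2; A3; B1; B2; B3; Q].

Lemma states1_all s : In s states1.
Proof. destruct s; simpl; tauto. Qed.

Definition cls1 (s : state1) (l : label) (s' : state1) : option edge_class :=
  match s, l, s' with
  | S0, la, A1 => Some (side_a 1) | B1, la, Q => Some (side_a 1)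
  | S0, lb, B1 => Some (side_b 1) | A1, lb, Q => Some (side_b 1)
  | S0, la, A2 => Some (side_a 2) | B2, la, Q => Some (side_a 2)
  | S0, lb, B2 => Some (side_b 2) | A2, lb, Q => Some (side_b 2)
  | S0, la, A3 => Some (side_a 3) | B3, la, Q => Some (side_a 3)
  | S0, lb, B3 => Some (side_b 3) | A3, lb, Q => Some (side_b 3)
  | A1, lc, Q | B2, lc, Q | A3, lc, Q | B3, lc, Q => Some solo
  | _, _, _ => None
  end.

Definition cls2 (s : state1) (l : label) (s' : state1) : option edge_class :=
  match s, s' with
  | A3, _ | B3, _ | _, A3 | _, B3 => None
  | _, _ => cls1 s l s'
  end.

Definition Sys1 : TSI label := class_system cls1 diamond_ind S0.
Definition Sys2 : TSI label := class_system cls2 diamond_ind S0.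

Lemma Sys1_is_TSI : is_TSI Sys1.
Proof. solve_class_system states1 states1_all. Qed.

Lemma Sys2_is_TSI : is_TSI Sys2.
Proof. solve_class_system states1 states1_all. Qed.

Definition fold_state (s : state1) : state1 :=
  match s with A3 => A1 | B3 => B2 | s => s end.

Definition fold_trans (t : trn Sys1) : trn Sys2 :=
  let '(s, a, s') := t in (fold_state s, a, fold_state s').

Lemma fold_trans_is_trans (u : trn Sys1) : is_trans u -> is_trans (fold_trans u).
Proof. destruct_trans u; cbn; easy. Qed.

Lemma fold_trans_onto (s : state1) (v : trn Sys2) : is_trans v -> src v = fold_state s ->
  exists u : trn Sys1, is_trans u /\ src u = s /\ fold_trans u = v.
Proof.
  destruct v as [[s1 a] s2]. intros Hv E. cbn in E. subst s1. exists (s, a, s2).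
  destruct s, a, s2; cbn in Hv |- *; easy.
Qed.

Ltac intro_two_steps x y :=
  let s := fresh "s" in let a := fresh "a" in let s' := fresh "s'" in
  let r := fresh "r" in let b := fresh "b" in let r' := fresh "r'" in
  let Hx := fresh "Hx" in let Ex := fresh "Ex" in let Hy := fresh "Hy" in let Ey := fresh "Ey" in
  intros [Hx Ex] [Hy Ey];
  destruct x as [[s a] s']; cbn in Ex; subst s; destruct a, s'; cbn in Hx; try easy;
  destruct y as [[r b] r']; cbn in Ey; subst r; destruct b, r'; cbn in Hy; try easy.

Lemma Sys1_runs_stop_after_two {x y z : trn Sys1} :
  Xs (T := Sys1) S0 x -> Xs (tgt x) y -> ~ Xs (tgt y) z.
Proof.
  intro_two_steps x y; destruct z as [[r a] r']; intros [Hz Ez]; cbn in Ez; subst r;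
    destruct a, r'; cbn in Hz; easy.
Qed.

Lemma fold_trans_ind {x y : trn Sys1} : Xs (T := Sys1) S0 x -> Xs (tgt x) y ->
  (ind Sys1 x y <-> ind Sys2 (fold_trans x) (fold_trans y)).
Proof. intro_two_steps x y; cbn; tauto. Qed.

Definition short_run (p : list (trn Sys1)) : Prop :=
  p = [] \/ (exists x, p = [x] /\ Xs (T := Sys1) S0 x) \/
  (exists x y, p = [x; y] /\ Xs (T := Sys1) S0 x /\ Xs (tgt x) y).

Lemma short_run_snoc (p : list (trn Sys1)) (u : trn Sys1) :
  short_run p -> is_trans u -> src u = endst p -> short_run (p ++ [u]).
Proof.
  intros [-> | [(x & -> & Hx) | (x & y & -> & Hx & Hy)]] Hu Eu.
  - right; left. exists u. split; [reflexivity | split; assumption].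
  - right; right. exists x, u. split; [reflexivity | split; [assumption | split; assumption]].
  - exfalso. exact (Sys1_runs_stop_after_two Hx Hy (conj Hu Eu)).
Qed.

Lemma short_run_ind (p : list (trn Sys1)) : short_run p ->
  forall x y, In x p -> In y p -> (ind Sys1 x y <-> ind Sys2 (fold_trans x) (fold_trans y)).
Proof.
  assert (Hdiag : forall x, ind Sys1 x x <-> ind Sys2 (fold_trans x) (fold_trans x)).
  { intros x. split; intros H; contradict H; apply ind_by_class_irrefl, diamond_ind_irrefl. }
  intros [-> | [(x & -> & Hx) | (x & y & -> & Hx & Hy)]] u v Hu Hv; simpl in Hu, Hv.
  - contradiction.
  - destruct Hu as [<- | []], Hv as [<- | []]. apply Hdiag.
  - pose proof (fold_trans_ind Hx Hy) as Hxy.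
    destruct Hu as [<- | [<- | []]], Hv as [<- | [<- | []]]; try apply Hdiag; [exact Hxy|].
    change (ind_by_class cls1 diamond_ind y x <->
            ind_by_class cls2 diamond_ind (fold_trans y) (fold_trans x)).
    rewrite (ind_by_class_sym cls1 _ diamond_ind_sym), (ind_by_class_sym cls2 _ diamond_ind_sym).
    exact Hxy.
Qed.

Lemma Sys1_hpb_Sys2 : hpb_equiv Sys1 Sys2.
Proof.
  apply (hpb_equiv_of_map fold_trans fold_state short_run).
  - intros [[s a] s']; reflexivity.
  - intros [[s a] s']; reflexivity.
  - intros [[s a] s']; reflexivity.
  - reflexivity.
  - exact fold_trans_is_trans.
  - exact fold_trans_onto.
  - left; reflexivity.
  - exact short_run_snoc.
  - exact short_run_ind.
Qed.

Definition enables_c : form label := FDia lc FTT.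

Definition phi_split : form label :=
  FOt (FAnd (FDia la enables_c)
            (FAnd (FDia lb enables_c) (FNeg (FOt (FNeg (FDia lb enables_c)))))).

Definition diamond3 : tset Sys1 := fun t => t = (S0, la, A3) \/ t = (S0, lb, B3).

Lemma diamond3_sqsub : sqsub diamond3 (Xs (T := Sys1) S0).
Proof.
  apply sqsub_intro with (S0, la, A3); [intros t [-> | ->]; split; easy | left; reflexivity |].
  intros t [Ht Hs] [_ Hi]. destruct_trans t; cbn in Ht, Hs, Hi; try easy; right; reflexivity.
Qed.

Lemma diamond3_inX : inX diamond3.
Proof. apply (pair_inX (T := Sys1) (s := S0)); [split; easy .. | exact diamond3_sqsub]. Qed.

Lemma diamond3_sub_b3 {M : tset Sys1} : sqsub M diamond3 -> M (S0, lb, B3).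
Proof.
  intros Hsq. apply (sqsub_closed Hsq (or_intror eq_refl)).
  intros t' Ht' Hne. destruct (proj1 Hsq t' Ht') as [-> | ->]; [split; easy | contradiction].
Qed.

Lemma Sys1_phi_split : sat (Xs (T := Sys1) S0) None phi_split.
Proof.
  assert (Hc : forall r : trn Sys1, r = (S0, la, A3) \/ r = (S0, lb, B3) ->
                 sat (Xs (tgt r)) (Some r) enables_c).
  { intros r [-> | ->];
      [apply sat_dia_intro with (A3, lc, Q) | apply sat_dia_intro with (B3, lc, Q)]; easy. }
  exists diamond3. split; [exact diamond3_inX | split; [exact diamond3_sqsub | split; [|split]]].
  - apply sat_dia_intro with (S0, la, A3); auto; left; reflexivity.
  - apply sat_dia_intro with (S0, lb, B3); auto; right; reflexivity.
  - intros (M & _ & Hsq & Hn). apply Hn.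
    apply sat_dia_intro with (S0, lb, B3); [exact (diamond3_sub_b3 Hsq) | reflexivity
      | reflexivity | apply Hc; right; reflexivity].
Qed.

Lemma Sys2_c_enabling_steps {r : trn Sys2} :
  Xs (T := Sys2) S0 r -> sat (Xs (tgt r)) (Some r) enables_c ->
  r = (S0, la, A1) \/ r = (S0, lb, B2).
Proof.
  intros [Hr Er] (c & [Hc Ec] & Hl & _).
  destruct r as [[s a] s']; cbn in Er; subst s; destruct a, s'; cbn in Hr; try easy; auto;
    destruct c as [[s a] s']; cbn in Ec, Hl; subst s a; destruct s'; cbn in Hc; easy.
Qed.

Lemma Sys2_process_of_c_steps {M : tset Sys2} :
  inX M -> M (S0, la, A1) -> M (S0, lb, B2) -> forall t, M t <-> Xs (T := Sys2) S0 t.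
Proof.
  assert (HX : forall s, (forall t, M t <-> Xs (T := Sys2) s t) -> M (S0, la, A1) ->
                 forall t, M t <-> Xs (T := Sys2) S0 t).
  { intros s E Ha. destruct (proj1 (E _) Ha) as [_ Es]. cbn in Es. subst s. exact E. }
  intros [[s E] | [[[s E] | [_ [_ Hcf]]] _]] Ha Hb; eauto.
  destruct (Hcf _ _ Ha Hb ltac:(discriminate)) as [_ Hi]. easy.
Qed.

Definition diamond1 : tset Sys2 := fun t => t = (S0, la, A1) \/ t = (S0, lb, B1).

Lemma diamond1_sqsub {R : tset Sys2} : (forall t, R t <-> Xs (T := Sys2) S0 t) -> sqsub diamond1 R.
Proof.
  intros HR. apply sqsub_intro with (S0, la, A1);
    [intros t [-> | ->]; apply HR; split; easy | left; reflexivity |].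
  intros t Ht [_ Hi]. apply HR in Ht. destruct Ht as [Ht Hs].
  destruct_trans t; cbn in Ht, Hs, Hi; try easy; right; reflexivity.
Qed.

Lemma diamond1_inX : inX diamond1.
Proof.
  apply (pair_inX (T := Sys2) (s := S0)); [split; easy .. | apply diamond1_sqsub; reflexivity].
Qed.

Lemma diamond1_no_c_after_b : ~ sat diamond1 None (FDia lb enables_c).
Proof.
  intros (r & [-> | ->] & Hl & _ & (c & [Hc Ec] & Hlc & _)); [discriminate|].
  destruct c as [[s a] s']; cbn in Ec, Hlc; subst s a; destruct s'; cbn in Hc; easy.
Qed.

Lemma Sys2_not_phi_split : ~ sat (Xs (T := Sys2) S0) None phi_split.
Proof.
  intros (M & HX & [HM _] & (r & Hr & Hl & _ & Hc) & (r' & Hr' & Hl' & _ & Hc') & Hneg).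
  destruct (Sys2_c_enabling_steps (HM _ Hr) Hc) as [-> | ->]; [|discriminate].
  destruct (Sys2_c_enabling_steps (HM _ Hr') Hc') as [-> | ->]; [discriminate|].
  apply Hneg. exists diamond1. split; [exact diamond1_inX|].
  split; [exact (diamond1_sqsub (Sys2_process_of_c_steps HX Hr Hr')) | exact diamond1_no_c_after_b].
Qed.

Lemma Sys1_not_tmu_Sys2 : ~ tmu_equiv Sys1 Sys2.
Proof. intros H. exact (Sys2_not_phi_split (proj1 (H phi_split) Sys1_phi_split)). Qed.

(** * Logically equivalent systems that are not hp-bisimilar *)

Inductive state2 := P0 | PA | PB | PQ | PR.

Definition states2 := [P0; PA; PB; PQ; PR].

Lemma states2_all s : In s states2.
Proof. destruct s; simpl; tauto. Qed.

Definition cls3 (s : state2) (l : label) (s' : state2) : option edge_class :=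
  match s, l, s' with
  | P0, la, PA | PB, la, PQ => Some (side_a 0)
  | P0, lb, PB | PA, lb, PQ => Some (side_b 0)
  | _, _, _ => None
  end.

Definition cls4 (s : state2) (l : label) (s' : state2) : option edge_class :=
  match s, l, s' with
  | PA, lb, PR => Some solo
  | _, _, _ => cls3 s l s'
  end.

Definition Sys3 : TSI label := class_system cls3 diamond_ind P0.
Definition Sys4 : TSI label := class_system cls4 diamond_ind P0.

Lemma Sys3_is_TSI : is_TSI Sys3.
Proof. solve_class_system states2 states2_all. Qed.

Lemma Sys4_is_TSI : is_TSI Sys4.
Proof. solve_class_system states2 states2_all. Qed.

Lemma Sys3_not_hpb_Sys4 : ~ hpb_equiv Sys3 Sys4.
Proof.
  intros H. inversion H as [p1 p2 _ Hback]; subst.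
  destruct (Hback (P0, la, PA) ltac:(easy) eq_refl) as (u & Hu & Hs & Hl & _ & W).
  destruct u as [[s a] s']; cbn in Hs, Hl; subst s a; destruct s'; cbn in Hu; try easy.
  inversion W as [p1 p2 _ Hback']; subst.
  destruct (Hback' (PA, lb, PR) ltac:(easy) eq_refl) as (u & Hu' & Hs & Hl & [Hsync _] & _).
  destruct u as [[s a] s']; cbn in Hs, Hl; subst s a; destruct s'; cbn in Hu'; try easy.
  cbn in Hsync. destruct Hsync as [Hsync _]. discriminate (Hsync eq_refl).
Qed.

Definition b_extra : trn Sys4 := (PA, lb, PR).

Lemma trans34 (t : trn Sys3) : is_trans t -> is_trans (T := Sys4) t.
Proof. destruct_trans t; cbn; easy. Qed.

Lemma trans43 (t : trn Sys4) : is_trans t -> is_trans (T := Sys3) t \/ t = b_extra.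
Proof. destruct_trans t; cbn; auto. Qed.

Lemma ind34 (t u : trn Sys3) : ind Sys3 t u <-> ind Sys4 t u.
Proof. destruct_trans t; destruct_trans u; cbn; split; intros H; easy. Qed.

Lemma otimes34 (t u : trn Sys3) : otimes t u <-> otimes (T := Sys4) t u.
Proof. unfold otimes. rewrite ind34. reflexivity. Qed.

Lemma sqsub34 {M R : tset Sys3} : sqsub M R <-> sqsub (T := Sys4) M R.
Proof.
  unfold sqsub. split; intros [HMR Hmax]; split; auto;
    intros (t & Ht & Hn & Hot); apply Hmax; exists t; split; auto; split; auto;
    intros t' Ht'; apply otimes34; auto.
Qed.

Lemma Xs34 (s : state2) : s <> PA -> Xs (T := Sys3) s = Xs (T := Sys4) s.
Proof.
  intros Hs. apply tset_ext. intros t. split; intros [Ht Es]; split; auto using trans34.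
  destruct (trans43 t Ht) as [H | ->]; [exact H | cbn in Es; congruence].
Qed.

Lemma Xs3_PA : Xs (T := Sys3) PA = (fun t => t = (PA, lb, PQ)).
Proof.
  apply tset_ext. intros t. split; [intros [Ht Es] | intros ->; split; easy].
  destruct t as [[s a] s']; cbn in Es; subst s; destruct a, s'; cbn in Ht; easy.
Qed.

Lemma Xs4_PA {t : trn Sys4} : Xs (T := Sys4) PA t ->
  lab t = lb /\ (forall u, ~ Xs (T := Sys4) (tgt t) u) /\
  (forall u, Xs (T := Sys4) PA u -> ~ otimes t u).
Proof.
  intros [Ht Es]. destruct t as [[s a] s']; cbn in Es; subst s; destruct a, s'; cbn in Ht; try easy;
    (split; [reflexivity | split]);
    [ intros [[s a] s'] [Hu Eu] | intros [[s a] s'] [Hu Eu] [_ Hi]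
    | intros [[s a] s'] [Hu Eu] | intros [[s a] s'] [Hu Eu] [_ Hi] ];
    cbn in Eu; subst s; destruct a, s'; cbn in Hu; easy.
Qed.

Lemma Xs3_PQ (u : trn Sys3) : ~ Xs (T := Sys3) PQ u.
Proof. intros [Hu Eu]. destruct u as [[s a] s']; cbn in Eu; subst s; destruct a, s'; easy. Qed.

Lemma Xs4_PQ (u : trn Sys4) : ~ Xs (T := Sys4) PQ u.
Proof. intros [Hu Eu]. destruct u as [[s a] s']; cbn in Eu; subst s; destruct a, s'; easy. Qed.

Lemma sub_Xs3_PA {M : tset Sys3} :
  (exists t, M t) -> (forall t, M t -> Xs (T := Sys3) PA t) -> M = Xs (T := Sys3) PA.
Proof.
  rewrite Xs3_PA. intros [m Hm] HM. apply tset_ext. intros t. split; [exact (HM t)|].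
  intros ->. rewrite <- (HM m Hm). exact Hm.
Qed.

Lemma conflict_free34 {M : tset Sys3} : conflict_free M -> conflict_free (T := Sys4) M.
Proof.
  intros [[s Hs] Hp]. split.
  - exists s. intros t Ht. destruct (Hs t Ht). auto using trans34.
  - intros t t' Ht Ht' Hne. apply otimes34. auto.
Qed.

Lemma conflict_free43 {M : tset Sys3} : (forall t, M t -> is_trans t) ->
  conflict_free (T := Sys4) M -> conflict_free M.
Proof.
  intros HM [[s Hs] Hp]. split.
  - exists s. intros t Ht. destruct (Hs t Ht). auto.
  - intros t t' Ht Ht' Hne. apply otimes34. auto.
Qed.

Lemma inX4_Xs3 (s : state2) : inX (T := Sys4) (Xs (T := Sys3) s).
Proof.
  destruct (classic (s = PA)) as [-> | Hs].
  - rewrite Xs3_PA. apply (@singleton_inX _ Sys4 PA); [split; easy|].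
    intros t Ht. apply (Xs4_PA Ht). split; easy.
  - rewrite Xs34 by exact Hs. left. exists s. intros t. reflexivity.
Qed.

Lemma inX34 {M : tset Sys3} : inX M -> inX (T := Sys4) M.
Proof.
  intros [[s E] | [[[s' E] | [Hne Hcf]] [s Hsq]]];
    try (rewrite (tset_ext E); apply inX4_Xs3).
  destruct (classic (s = PA)) as [-> | Hs].
  - rewrite (sub_Xs3_PA Hne (proj1 Hsq)). apply inX4_Xs3.
  - right. split; [right; split; [exact Hne | exact (conflict_free34 Hcf)]|].
    exists s. rewrite <- Xs34 by exact Hs. apply sqsub34, Hsq.
Qed.

Lemma inX43 {M : tset Sys3} : (forall t, M t -> is_trans t) -> inX (T := Sys4) M -> inX M.
Proof.
  intros HM.
  assert (HXs : forall s, (forall t, M t <-> Xs (T := Sys4) s t) -> inX M).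
  { intros s E. destruct (classic (s = PA)) as [-> | Hs].
    - exfalso. apply (HM b_extra); [apply E; split; easy | reflexivity].
    - left. exists s. rewrite Xs34 by exact Hs. exact E. }
  intros [[s E] | [[[s' E] | [Hne Hcf]] [s Hsq]]]; eauto.
  destruct (classic (s = PA)) as [-> | Hs].
  - left. exists PA. rewrite <- (sub_Xs3_PA Hne). { intros t. reflexivity. }
    intros t Ht. split; [exact (HM t Ht) | apply (proj1 Hsq t Ht)].
  - right. split; [right; split; [exact Hne | exact (conflict_free43 HM Hcf)]|].
    exists s. rewrite Xs34 by exact Hs. apply sqsub34, Hsq.
Qed.

(* The last clause matches {PA -b-> PQ} of Sys3 with any nonempty set of b-moves out of PA in
   Sys4: all of them lead to deadlocks and no two of them are independent. *)
Inductive related : tset Sys3 -> option (trn Sys3) -> tset Sys4 -> option (trn Sys4) -> Prop :=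
| related_same (R : tset Sys3) (t : option (trn Sys3)) :
    (forall u, R u -> Xs (T := Sys3) (cur_state t) u) -> related R t R t
| related_dead (R3 : tset Sys3) t3 (R4 : tset Sys4) t4 :
    (forall u, ~ R3 u) -> (forall u, ~ R4 u) -> related R3 t3 R4 t4
| related_branch (t : option (trn Sys3)) (R4 : tset Sys4) : cur_state t = PA ->
    (forall u, R4 u -> Xs (T := Sys4) PA u) -> (exists u, R4 u) ->
    related (Xs (T := Sys3) PA) t R4 t.

Lemma related_Xs (s : state2) (t : option (trn Sys3)) :
  cur_state t = s -> related (Xs (T := Sys3) s) t (Xs (T := Sys4) s) t.
Proof.
  intros Ht. destruct (classic (s = PA)) as [-> | Hs].
  - apply related_branch; auto. exists (PA, lb, PQ). split; easy.
  - rewrite <- Xs34 by exact Hs. apply related_same. rewrite Ht. auto.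
Qed.

Lemma related_dead_succ {r3 : trn Sys3} {r4 : trn Sys4} :
  r3 = (PA, lb, PQ) -> Xs (T := Sys4) PA r4 ->
  related (Xs (tgt r3)) (Some r3) (Xs (tgt r4)) (Some r4).
Proof.
  intros -> Hr4. apply related_dead; [exact Xs3_PQ | apply (Xs4_PA Hr4)].
Qed.

Lemma related_dia_l {R3 t3 R4 t4} {r : trn Sys3} : related R3 t3 R4 t4 -> R3 r ->
  exists r4, R4 r4 /\ lab r4 = lab r /\ (leA t4 r4 \/ ominusA t4 r4) /\
             related (Xs (tgt r)) (Some r) (Xs (tgt r4)) (Some r4).
Proof.
  intros HR Hr. destruct HR as [R t HR | R3 t3 R4 t4 H3 H4 | t R4 Ht HR4 [u Hu]].
  - exists r. destruct (HR r Hr) as [_ Es].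
    split; [exact Hr | split; [reflexivity | split; [auto using leA_or_ominusA|]]].
    apply related_Xs. reflexivity.
  - contradiction (H3 r).
  - rewrite Xs3_PA in Hr. exists u. destruct (Xs4_PA (HR4 u Hu)) as [Hl _].
    split; [exact Hu | split; [rewrite Hl, Hr; reflexivity | split]].
    + apply leA_or_ominusA. exact (eq_trans (proj2 (HR4 u Hu)) (eq_sym Ht)).
    + exact (related_dead_succ Hr (HR4 u Hu)).
Qed.

Lemma related_dia_r {R3 t3 R4 t4} {r : trn Sys4} : related R3 t3 R4 t4 -> R4 r ->
  exists r3, R3 r3 /\ lab r3 = lab r /\ (leA t3 r3 \/ ominusA t3 r3) /\
             related (Xs (tgt r3)) (Some r3) (Xs (tgt r)) (Some r).
Proof.
  intros HR Hr. destruct HR as [R t HR | R3 t3 R4 t4 H3 H4 | t R4 Ht HR4 _].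
  - exists r. destruct (HR r Hr) as [_ Es].
    split; [exact Hr | split; [reflexivity | split; [auto using leA_or_ominusA|]]].
    apply related_Xs. reflexivity.
  - contradiction (H4 r).
  - exists (PA, lb, PQ). destruct (Xs4_PA (HR4 r Hr)) as [Hl _].
    split; [split; easy | split; [rewrite Hl; reflexivity | split]].
    + apply leA_or_ominusA. rewrite Ht. reflexivity.
    + exact (related_dead_succ eq_refl (HR4 r Hr)).
Qed.

Lemma related_ot_l {R3 t3 R4 t4} {M : tset Sys3} : related R3 t3 R4 t4 -> inX M -> sqsub M R3 ->
  exists M4, inX M4 /\ sqsub M4 R4 /\ related M t3 M4 t4.
Proof.
  intros HR HX Hsq. destruct HR as [R t HR | R3 t3 R4 t4 H3 H4 | t R4 Ht HR4 [u Hu]].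
  - exists M. split; [exact (inX34 HX) | split; [exact (proj1 sqsub34 Hsq)|]].
    apply related_same. intros u Hu. exact (HR u (proj1 Hsq u Hu)).
  - exists (Xs (T := Sys4) PQ). split; [left; exists PQ; intros u; reflexivity|].
    split; [exact (sqsub_empty Xs4_PQ H4)|].
    apply related_dead; [intros u Hu; exact (H3 u (proj1 Hsq u Hu)) | exact Xs4_PQ].
  - assert (HM : M = Xs (T := Sys3) PA).
    { apply sub_Xs3_PA; [|exact (proj1 Hsq)].
      apply (sqsub_inhabited Hsq). exists (PA, lb, PQ). split; easy. }
    assert (Hno : forall v, Xs (T := Sys4) PA v -> ~ otimes v u).
    { intros v Hv. exact (proj2 (proj2 (Xs4_PA Hv)) u (HR4 u Hu)). }
    exists (fun v => v = u). split; [exact (singleton_inX (HR4 u Hu) Hno)|].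
    split; [exact (singleton_sqsub Hu (fun v Hv => Hno v (HR4 v Hv)))|].
    rewrite HM. apply related_branch;
      [exact Ht | intros v ->; exact (HR4 u Hu) | exists u; reflexivity].
Qed.

Lemma related_ot_r {R3 t3 R4 t4} {M : tset Sys4} : related R3 t3 R4 t4 -> inX M -> sqsub M R4 ->
  exists M3, inX M3 /\ sqsub M3 R3 /\ related M3 t3 M t4.
Proof.
  intros HR HX Hsq. destruct HR as [R t HR | R3 t3 R4 t4 H3 H4 | t R4 Ht HR4 HR4ne].
  - exists M. split; [exact (inX43 (fun u Hu => proj1 (HR u (proj1 Hsq u Hu))) HX)|].
    split; [exact (proj2 sqsub34 Hsq)|].
    apply related_same. intros u Hu. exact (HR u (proj1 Hsq u Hu)).
  - exists (Xs (T := Sys3) PQ). split; [left; exists PQ; intros u; reflexivity|].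
    split; [exact (sqsub_empty Xs3_PQ H3)|].
    apply related_dead; [exact Xs3_PQ | intros u Hu; exact (H4 u (proj1 Hsq u Hu))].
  - exists (Xs (T := Sys3) PA). split; [left; exists PA; intros u; reflexivity|].
    split; [apply sqsub_refl|].
    apply related_branch; [exact Ht | intros u Hu; exact (HR4 u (proj1 Hsq u Hu)) |].
    exact (sqsub_inhabited Hsq HR4ne).
Qed.

Lemma related_bisimulation : trace_bisimulation related.
Proof.
  split; intros *.
  - intros HR Hr _. exact (related_dia_l HR Hr).
  - intros HR Hr _. exact (related_dia_r HR Hr).
  - exact related_ot_l.
  - exact related_ot_r.
Qed.

Lemma Sys3_tmu_Sys4 : tmu_equiv Sys3 Sys4.
Proof.
  intros phi. apply (sat_trace_bisimulation related_bisimulation). apply related_Xs. reflexivity.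
Qed.

Theorem proposition3 :
  (exists (L : Type) (T1 T2 : TSI L),
      is_TSI T1 /\ is_TSI T2 /\ hpb_equiv T1 T2 /\ ~ tmu_equiv T1 T2) /\
  (exists (L : Type) (T3 T4 : TSI L),
      is_TSI T3 /\ is_TSI T4 /\ tmu_equiv T3 T4 /\ ~ hpb_equiv T3 T4).
Proof.
  split.
  - exists label, Sys1, Sys2.
    exact (conj Sys1_is_TSI (conj Sys2_is_TSI (conj Sys1_hpb_Sys2 Sys1_not_tmu_Sys2))).
  - exists label, Sys3, Sys4.
    exact (conj Sys3_is_TSI (conj Sys4_is_TSI (conj Sys3_tmu_Sys4 Sys3_not_hpb_Sys4))).
Qed.
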